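(* Let $d\ge 3$. For every positive integer $n$ there is a convex lattice polytope $\mathcal{P}\subseteq\mathbb{R}^d$ (all vertices in $\mathbb{Z}^d$) with at least $n$ vertices such that every point of $\mathcal{P}\cap\mathbb{Z}^d$ lies in a vertex, an edge, or a two-dimensional face of $\mathcal{P}$. *)

From mathcomp Require Import all_boot all_order all_algebra.
From mathcomp Require Import reals.
Set Implicit Arguments. Unset Strict Implicit. Unset Printing Implicit Defensive.
Import Order.TTheory GRing.Theory Num.Theory.
Local Open Scope ring_scope.

Section Polytopes.
Variables (R : realType) (d : nat).

Definition dotv (x y : 'rV[R]_d) : R := \sum_(i < d) x 0 i * y 0 i.

Definition lattice_pt (x : 'rV[R]_d) : Prop :=
  forall i : 'I_d, exists z : int, x 0 i = z%:~R.

Definition conv (V : seq 'rV[R]_d) : 'rV[R]_d -> Prop :=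
  fun x => exists w : 'I_(size V) -> R,
    (forall i, 0 <= w i) /\ \sum_i w i = 1 /\ x = \sum_i w i *: V`_i.

Definition affdim_le (S : 'rV[R]_d -> Prop) (k : nat) : Prop :=
  exists (p : 'rV[R]_d) (B : 'M[R]_(k, d)),
    forall x, S x -> exists a : 'rV[R]_k, x = p + a *m B.

Definition full_dim (P : 'rV[R]_d -> Prop) : Prop := ~ affdim_le P d.-1.

(* F is a face of the convex set P: intersection of P with a supporting
   hyperplane { x | c.x = b } where c.x <= b on P (c = 0 gives P itself) *)
Definition is_face (P F : 'rV[R]_d -> Prop) : Prop :=
  exists (c : 'rV[R]_d) (b : R),
    (forall x, P x -> dotv c x <= b) /\
    (forall x, F x <-> (P x /\ dotv c x = b)).

Definition is_vertex (P : 'rV[R]_d -> Prop) (v : 'rV[R]_d) : Prop :=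
  P v /\ forall y z (t : R), P y -> P z -> 0 < t < 1 ->
    v = t *: y + (1 - t) *: z -> y = v /\ z = v.

End Polytopes.

From mathcomp Require Import all_boot all_order all_algebra.
From mathcomp Require Import reals.
From mathcomp Require Import ring lra zify.
Set Implicit Arguments. Unset Strict Implicit. Unset Printing Implicit Defensive.
Import Order.TTheory GRing.Theory Num.Theory.
Local Open Scope ring_scope.

(* Take the convex hull of 0, the unit vectors e_0, ..., e_(d-1) and the points
   (t, t^2, 0, ..., 0) for 3 <= t < n + 3.  Each parabola point is exposed by its
   tangent line 2t x_0 - x_1 <= t^2, which gives the n vertices.  For j >= 2 the
   coordinate x_j is between 0 and 1 on the polytope and equals 1 only at e_j;
   hence a lattice point is either the vertex e_j or has x_j = 0 for all j >= 2,
   and then it lies in the face x_2 + ... + x_(d-1) = 0, which is spanned by the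
   first two coordinates. *)

Section ConvexHull.
Variables (R : realType) (d : nat).
Implicit Types (V : seq 'rV[R]_d) (P S : 'rV[R]_d -> Prop) (c x y v : 'rV[R]_d).

Lemma dotvC x y : dotv x y = dotv y x.
Proof. by apply: eq_bigr => i _; rewrite mulrC. Qed.

Lemma dotv0r c : dotv c 0 = 0.
Proof. by rewrite /dotv big1 // => i _; rewrite mxE mulr0. Qed.

Lemma dotvDr c x y : dotv c (x + y) = dotv c x + dotv c y.
Proof. by rewrite /dotv -big_split; apply: eq_bigr => i _; rewrite mxE mulrDr. Qed.

Lemma dotvZr c a x : dotv c (a *: x) = a * dotv c x.
Proof. by rewrite /dotv big_distrr; apply: eq_bigr => i _; rewrite mxE mulrCA. Qed.

Lemma dotvNr c x : dotv c (- x) = - dotv c x.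
Proof. by rewrite -scaleN1r dotvZr mulN1r. Qed.

Lemma dotv_sumr c (I : Type) (r : seq I) (p : pred I) (F : I -> 'rV[R]_d) :
  dotv c (\sum_(i <- r | p i) F i) = \sum_(i <- r | p i) dotv c (F i).
Proof. exact: (big_morph _ (dotvDr c) (dotv0r c)). Qed.

Lemma dotv_delta c k : dotv c (delta_mx 0 k) = c 0 k.
Proof.
rewrite /dotv (bigD1 k) //= mxE !eqxx mulr1 big1 ?addr0 // => j /negbTE jk.
by rewrite mxE jk andbF mulr0.
Qed.

Lemma mem_conv V v : v \in V -> conv V v.
Proof.
move=> vV; have kV : (index v V < size V)%N by rewrite index_mem.
exists (fun i => (i == Ordinal kV)%:R); split; first by move=> i; rewrite ler0n.
split; first by rewrite (bigD1 (Ordinal kV)) //= eqxx big1 ?addr0 // => i /negbTE ->.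
rewrite (bigD1 (Ordinal kV)) //= eqxx scale1r nth_index // big1 ?addr0 // => i /negbTE ->.
by rewrite scale0r.
Qed.

Lemma conv_dotv_defect V c b (w : 'I_(size V) -> R) : \sum_i w i = 1 ->
  b - dotv c (\sum_i w i *: V`_i) = \sum_i w i * (b - dotv c V`_i).
Proof.
move=> w1; rewrite dotv_sumr; under [RHS]eq_bigr do rewrite mulrBr.
by rewrite sumrB -big_distrl /= w1 mul1r; under eq_bigr do rewrite dotvZr.
Qed.

Section SupportingHyperplane.
Variables (V : seq 'rV[R]_d) (c : 'rV[R]_d) (b : R).
Hypothesis V_le : forall w, w \in V -> dotv c w <= b.

Lemma conv_halfspace y : conv V y -> dotv c y <= b.
Proof.
move=> [w [w0 [w1 ->]]]; rewrite -subr_ge0 conv_dotv_defect // sumr_ge0 // => i _.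
by rewrite mulr_ge0 // subr_ge0 V_le // mem_nth.
Qed.

Lemma conv_exposed_point v : (forall w, w \in V -> dotv c w = b -> w = v) ->
  forall y, conv V y -> dotv c y = b -> y = v.
Proof.
move=> V_eq y [w [w0 [w1 ->]]] yb.
have gap_ge0 i : 0 <= w i * (b - dotv c V`_i).
  by rewrite mulr_ge0 // subr_ge0 V_le // mem_nth.
have /psumr_eq0P gap0 : \sum_i w i * (b - dotv c V`_i) = 0.
  by rewrite -conv_dotv_defect // yb subrr.
rewrite -[v]scale1r -w1 scaler_suml; apply: eq_bigr => i _.
have /eqP := gap0 (fun i _ => gap_ge0 i) i isT.
rewrite mulf_eq0 subr_eq0 => /orP [/eqP -> | /eqP Vib]; first by rewrite !scale0r.
by rewrite (V_eq _ (mem_nth _ (ltn_ord i))) // Vib.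
Qed.

Lemma exposed_point_vertex v : v \in V -> dotv c v = b ->
  (forall w, w \in V -> dotv c w = b -> w = v) -> is_vertex (conv V) v.
Proof.
move=> vV vb V_eq; split=> [|y z t Py Pz /andP [t0 t1] vE]; first exact: mem_conv.
have yb := conv_halfspace Py; have zb := conv_halfspace Pz.
have : b = t * dotv c y + (1 - t) * dotv c z by rewrite -vb vE dotvDr !dotvZr.
move=> bE; split; apply: conv_exposed_point V_eq _ _ _ => //; nra.
Qed.

End SupportingHyperplane.

Lemma conv_ge0 V : (forall w, w \in V -> forall j, 0 <= w 0 j) ->
  forall y, conv V y -> forall j, 0 <= y 0 j.
Proof.
move=> V_ge0 y Py j; rewrite -oppr_le0 -[y 0 j]dotv_delta -dotvNr dotvC.
apply: (conv_halfspace _ Py) => w /V_ge0 w_ge0.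
by rewrite dotvC dotvNr dotv_delta oppr_le0.
Qed.

Lemma is_face_supporting P c b : (forall y, P y -> dotv c y <= b) ->
  is_face P (fun y => P y /\ dotv c y = b).
Proof. by move=> Pb; exists c, b. Qed.

Lemma affdim_le_point S v k : (forall y, S y -> y = v) -> affdim_le S k.
Proof. by move=> Sv; exists v, 0 => y /Sv ->; exists 0; rewrite mulmx0 addr0. Qed.

Lemma affdim_le_coord S k :
  (forall y, S y -> forall j : 'I_d, (k <= j)%N -> y 0 j = 0) -> affdim_le S k.
Proof.
move=> S0; exists 0, (pid_mx k) => y Sy; exists (y *m pid_mx k).
rewrite add0r -mulmxA mul_pid_mx minnn; apply/rowP => j.
rewrite mxE (bigD1 j) //= big1 => [|i ij]; last first.
  by rewrite -val_eqE in ij; rewrite mxE (negbTE ij) mulr0.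
rewrite mxE eqxx /= addr0; case: ltnP => [_|kj]; first by rewrite mulr1.
by rewrite minnn in kj; rewrite mulr0 (S0 y Sy j kj).
Qed.

Lemma full_dim_simplex P : (0 < d)%N -> P 0 -> (forall k, P (delta_mx 0 k)) ->
  full_dim P.
Proof.
move=> d_gt0 P0 Pe [p [B PB]].
have [a0 a0E] := PB _ P0.
have /fin_all_exists [a aE] : forall k, exists a, delta_mx 0 k = p + a *m B.
  by move=> k; apply: PB.
have a0B : a0 *m B = - p by apply/eqP; rewrite -addr_eq0 addrC -a0E.
have : (\matrix_k (a k - a0)) *m B = 1%:M.
  apply/row_matrixP => k; rewrite row_mul rowK row1 mulmxBl a0B opprK.
  by rewrite (aE k) addrC.
move/(congr1 mxrank); rewrite mxrank1 => rkB.
have := mxrankM_maxr (\matrix_k (a k - a0)) B; rewrite rkB.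
by have := rank_leq_row B; lia.
Qed.

Lemma lattice_ptP x : lattice_pt x <-> forall j, x 0 j \is a Num.int.
Proof. by split=> xZ j; apply/intrP. Qed.

End ConvexHull.

Section ParabolaPolytope.
Variables (R : realType) (m : nat).
Local Notation d := m.+2.
Implicit Types (w x y : 'rV[R]_d).

Let i1 : 'I_d := lift ord0 ord0.

Definition parabola_pt (t : nat) : 'rV[R]_d :=
  t%:R *: delta_mx 0 ord0 + (t * t)%:R *: delta_mx 0 i1.

(* t >= 3 keeps e_0 strictly below each tangent line 2t x_0 - x_1 = t^2. *)
Definition parabola_polytope (n : nat) : seq 'rV[R]_d :=
  0 :: [seq delta_mx 0 k | k <- enum 'I_d] ++ [seq parabola_pt t | t <- iota 3 n].

Lemma parabola_ptE t j :
  parabola_pt t 0 j = t%:R * (j == ord0)%:R + (t * t)%:R * (j == i1)%:R.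
Proof. by rewrite !mxE. Qed.

Lemma parabola_pt_high t (j : 'I_d) : (2 <= j)%N -> parabola_pt t 0 j = 0.
Proof. by rewrite parabola_ptE; case: j => [[|[|j]] ?] // _; rewrite !mulr0 addr0. Qed.

Lemma parabola_polytopeP n w : w \in parabola_polytope n ->
  [\/ w = 0, exists k, w = delta_mx 0 k | exists2 t, (3 <= t)%N & w = parabola_pt t].
Proof.
rewrite inE mem_cat => /orP [/eqP -> | /orP [/mapP [k _ ->] | /mapP [t]]].
- exact: Or31.
- by apply: Or32; exists k.
- by rewrite mem_iota => /andP [t3 _] ->; apply: Or33; exists t.
Qed.

Lemma parabola_polytope_lattice n w : w \in parabola_polytope n -> lattice_pt w.
Proof.
move=> /parabola_polytopeP [-> | [k ->] | [t _ ->]]; apply/lattice_ptP => j.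
- by rewrite mxE rpred0.
- by rewrite mxE rpred_nat.
- by rewrite parabola_ptE rpredD ?rpredM ?rpred_nat.
Qed.

Lemma parabola_polytope_ge0 n w : w \in parabola_polytope n -> forall j, 0 <= w 0 j.
Proof.
move=> /parabola_polytopeP [-> | [k ->] | [t _ ->]] j.
- by rewrite mxE.
- by rewrite mxE ler0n.
- by rewrite parabola_ptE addr_ge0 ?mulr_ge0 ?ler0n.
Qed.

Lemma conv_parabola_polytope_ge0 n y :
  conv (parabola_polytope n) y -> forall j, 0 <= y 0 j.
Proof. exact: (conv_ge0 (@parabola_polytope_ge0 n)). Qed.

Lemma parabola_pt0 t : parabola_pt t 0 ord0 = t%:R.
Proof. by rewrite parabola_ptE mulr1 mulr0 addr0. Qed.

Lemma parabola_pt1 t : parabola_pt t 0 i1 = (t * t)%:R.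
Proof. by rewrite parabola_ptE mulr0 mulr1 add0r. Qed.

Definition parabola_normal (t : nat) : 'rV[R]_d :=
  (2 * t)%:R *: delta_mx 0 ord0 - delta_mx 0 i1.

Lemma dotv_parabola_normal t w :
  dotv (parabola_normal t) w = (2 * t)%:R * w 0 ord0 - w 0 i1.
Proof. by rewrite dotvC dotvDr dotvNr dotvZr !dotv_delta. Qed.

Lemma dotv_parabola_normal_pt t :
  dotv (parabola_normal t) (parabola_pt t) = (t * t)%:R.
Proof. by rewrite dotv_parabola_normal parabola_pt0 parabola_pt1 !natrM; ring. Qed.

Lemma parabola_normal_lt n t : (3 <= t)%N -> forall w, w \in parabola_polytope n ->
  w != parabola_pt t -> dotv (parabola_normal t) w < (t * t)%:R.
Proof.
move=> t3 w /parabola_polytopeP [-> | [k ->] | [s _ ->]] wt; rewrite dotv_parabola_normal.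
- by rewrite !mxE mulr0 subr0 ltr0n; nia.
- rewrite !mxE /= ltrBlDr; apply: (@le_lt_trans _ _ (2 * t)%:R).
    by rewrite ler_piMr ?ler0n // lern1 leq_b1.
  by rewrite ltr_wpDr ?ler0n // ltr_nat; nia.
- have st : s != t by apply: contraNneq wt => ->.
  rewrite parabola_pt0 parabola_pt1 ltrBlDr -!natrM -natrD ltr_nat; nia.
Qed.

Lemma parabola_pt_vertex n t : (3 <= t < 3 + n)%N ->
  is_vertex (conv (parabola_polytope n)) (parabola_pt t).
Proof.
move=> /andP [t3 tn]; have lt_t := parabola_normal_lt (n := n) t3.
apply: (@exposed_point_vertex _ _ _ (parabola_normal t) (t * t)%:R).
- move=> w wV; have [-> | wt] := eqVneq w (parabola_pt t); last exact/ltW/lt_t.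
  by rewrite dotv_parabola_normal_pt.
- by rewrite inE mem_cat map_f ?orbT // mem_iota t3.
- exact: dotv_parabola_normal_pt.
- move=> w wV wt; have [// | w_ne] := eqVneq w (parabola_pt t).
  by have := lt_t _ wV w_ne; rewrite wt ltxx.
Qed.

Lemma parabola_pt_inj : injective parabola_pt.
Proof.
move=> s t /(congr1 (fun w => w 0 ord0)); rewrite !parabola_pt0.
by move/eqP; rewrite eqr_nat => /eqP.
Qed.

Lemma parabola_polytope_high n (j : 'I_d) w : (2 <= j)%N ->
  w \in parabola_polytope n -> w 0 j = 0 \/ w = delta_mx 0 j.
Proof.
move=> j2 /parabola_polytopeP [-> | [k ->] | [t _ ->]].
- by left; rewrite mxE.
- have [-> | kj] := eqVneq k j; [by right | left].
  by rewrite mxE eq_sym (negbTE kj) andbF.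
- by left; rewrite parabola_pt_high.
Qed.

Lemma conv_parabola_polytope_high n (j : 'I_d) y : (2 <= j)%N ->
  conv (parabola_polytope n) y -> y 0 j <= 1 /\ (y 0 j = 1 -> y = delta_mx 0 j).
Proof.
move=> j2 Py; rewrite -[y 0 j]dotv_delta dotvC.
have V_le w : w \in parabola_polytope n -> dotv (delta_mx 0 j) w <= 1.
  rewrite dotvC dotv_delta => /(parabola_polytope_high j2) [-> | ->] //.
  by rewrite mxE !eqxx.
split; first exact: (conv_halfspace V_le Py).
apply: (conv_exposed_point V_le) Py => w wV; rewrite dotvC dotv_delta.
by case: (parabola_polytope_high j2 wV) => [-> /eqP | //]; rewrite eq_sym oner_eq0.
Qed.

Definition floor_normal : 'rV[R]_d := - \sum_(j : 'I_d | (2 <= j)%N) delta_mx 0 j.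

Lemma dotv_floor_normal y : dotv floor_normal y = - \sum_(j : 'I_d | (2 <= j)%N) y 0 j.
Proof. by rewrite dotvC dotvNr dotv_sumr; under eq_bigr do rewrite dotv_delta. Qed.

Lemma conv_floor_le n y : conv (parabola_polytope n) y -> dotv floor_normal y <= 0.
Proof.
move=> Py; rewrite dotv_floor_normal oppr_le0 sumr_ge0 // => j _.
exact: conv_parabola_polytope_ge0 Py j.
Qed.

Lemma conv_floor_eq n y : conv (parabola_polytope n) y -> dotv floor_normal y = 0 ->
  forall j : 'I_d, (2 <= j)%N -> y 0 j = 0.
Proof.
move=> Py; rewrite dotv_floor_normal => /eqP; rewrite oppr_eq0 => /eqP y0 j j2.
apply: (psumr_eq0P _ y0) => // i _; exact: conv_parabola_polytope_ge0 Py i.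
Qed.

Lemma parabola_polytope_lattice_face n x :
  conv (parabola_polytope n) x -> lattice_pt x ->
  exists F, is_face (conv (parabola_polytope n)) F /\ F x /\ affdim_le F 2.
Proof.
move=> Px /lattice_ptP xZ.
have [/existsP [j /andP [j2 xj]] | /existsPn x_floor] :=
  boolP [exists j : 'I_d, (2 <= j)%N && (x 0 j != 0)].
- have [x_le1 x_eq] := conv_parabola_polytope_high j2 Px.
  have x1 : x 0 j = 1.
    apply/le_anti; rewrite x_le1 -(ger0_norm (conv_parabola_polytope_ge0 Px j)).
    exact: norm_intr_ge1.
  exists (fun y => conv (parabola_polytope n) y /\ dotv (delta_mx 0 j) y = 1).
  split; [|split].
  + apply: is_face_supporting => y /(conv_parabola_polytope_high j2) [y_le1 _].
    by rewrite dotvC dotv_delta.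
  + by rewrite dotvC dotv_delta.
  + apply: (affdim_le_point (v := delta_mx 0 j)) => y [Py].
    by rewrite dotvC dotv_delta; apply: (conv_parabola_polytope_high j2 Py).2.
- exists (fun y => conv (parabola_polytope n) y /\ dotv floor_normal y = 0).
  split; [|split].
  + exact/is_face_supporting/conv_floor_le.
  + split=> //; rewrite dotv_floor_normal big1 ?oppr0 // => j j2.
    by move: (x_floor j); rewrite j2 negbK => /eqP.
  + by apply: affdim_le_coord => y [Py y0] j j2; apply: (conv_floor_eq Py y0 j2).
Qed.

End ParabolaPolytope.

Theorem theorem11 (R : realType) (d : nat) (hd : (3 <= d)%N)
    (n : nat) (hn : (0 < n)%N) :
  exists V : seq 'rV[R]_d,
    (forall v, v \in V -> lattice_pt v) /\
    full_dim (conv V) /\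
    (exists s : seq 'rV[R]_d,
        uniq s /\ (n <= size s)%N /\ (forall v, v \in s -> is_vertex (conv V) v)) /\
    (forall x, conv V x -> lattice_pt x ->
       exists F, is_face (conv V) F /\ F x /\ affdim_le F 2).
Proof.
case: d hd => [|[|[|m]]] // _.
exists (parabola_polytope R m.+1 n); split; [|split; [|split]].
- exact: parabola_polytope_lattice.
- apply: full_dim_simplex => // [|k]; apply: mem_conv; first by rewrite inE eqxx.
  by rewrite inE mem_cat map_f ?mem_enum ?orbT.
- exists [seq parabola_pt R m.+1 t | t <- iota 3 n]; split; [|split].
  + by rewrite map_inj_uniq ?iota_uniq //; apply: parabola_pt_inj.
  + by rewrite size_map size_iota.
  + by move=> _ /mapP [t tn ->]; apply: parabola_pt_vertex; rewrite -mem_iota.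
- exact: parabola_polytope_lattice_face.
Qed.
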